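(* Let $S\subseteq\{0,1,\dots,\omega\}$ be finite. (i) $A\vdash_{\mathbf{RC}_S}B$ iff $A\vdash B$ is true in all finite RC$_S$-models. (ii) $A\vdash_{\mathbf{RC\omega}_S}B$ iff $A\vdash B$ is true in all finite persistent RC$_S$-models.
   Context: Strictly positive formulas: $A::= p\mid \top\mid (A\land B)\mid \alpha A$, $\alpha\le\omega$; for a signature $S$, ${\mathcal L}_S$ is the set of such formulas using only modalities from $S$, and $L_S$ is the logic $L$ with axioms and rules restricted to ${\mathcal L}_S$. $\mathbf{RJ}$: $A\vdash A$; $A\vdash\top$; cut; $A\land B\vdash A$; $A\land B\vdash B$; from $A\vdash B$, $A\vdash C$ infer $A\vdash B\land C$; from $A\vdash B$ infer $\alpha A\vdash\alpha B$; $\alpha\alpha A\vdash\alpha A$; $\alpha\beta A\vdash\beta A$, $\beta\alpha A\vdash\beta A$ for $\alpha\ge\beta$; $\alpha A\land\beta B\vdash\alpha(A\land\beta B)$ for $\alpha>\beta$. $\mathbf{RC}=\mathbf{RJ}+\{\alpha A\vdash\beta A:\alpha>\beta\}$; $\mathbf{RC\omega}=\mathbf{RC}+\{\omega A\vdash A\}$. Kripke model for $S$: nonempty $W$, relations $(R_\alpha)_{\alpha\in S}$, valuation; $x\Vdash\alpha A$ iff $\exists y(xR_\alpha y\wedge y\Vdash A)$, with usual clauses for $\top,\land$. RC$_S$-frame: for all $\alpha,\beta\in S$, $R_\alpha R_\beta\subseteq R_{\min(\alpha,\beta)}$; for $\alpha>\beta$, $xR_\alpha y\wedge xR_\beta z\Rightarrow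 yR_\beta z$; and $R_\alpha\subseteq R_\beta$ for $\beta<\alpha$. Persistent: $x\Vdash p$ and $yR_\omega x$ imply $y\Vdash p$ (if $\omega\in S$). Finite model: $W$ finite. A sequent is true in a model if it holds at every node. *)

From Stdlib Require Import List Arith.
Import ListNotations.

(* Modalities: ordinals alpha <= omega. *)
Inductive modal : Type := Fin (n : nat) | Omega.

Definition mlt (a b : modal) : Prop :=
  match a, b with
  | Fin m, Fin n => m < n
  | Fin _, Omega => True
  | Omega, _ => False
  end.

Definition mle (a b : modal) : Prop := mlt a b \/ a = b.

Definition mmin (a b : modal) : modal :=
  match a, b with
  | Fin m, Fin n => Fin (Nat.min m n)
  | Fin m, Omega => Fin m
  | Omega, b => b
  end.

(* Strictly positive formulas, propositional variables indexed by nat. *)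
Inductive formula : Type :=
  | Var (p : nat)
  | Top
  | And (A B : formula)
  | Dia (a : modal) (A : formula).

(* A signature S is a finite set of modalities, given as a list. *)
Fixpoint inL (S : list modal) (A : formula) : Prop :=
  match A with
  | Var _ | Top => True
  | And A B => inL S A /\ inL S B
  | Dia a A => In a S /\ inL S A
  end.

(* L_S, with L = RC (w = false) or RCω (w = true); axioms and rules
   restricted to formulas of L_S: every sequent occurring in a derivation
   consists of formulas of L_S. *)
Inductive derives (w : bool) (S : list modal) : formula -> formula -> Prop :=
  | d_refl A : inL S A -> derives w S A A
  | d_top A : inL S A -> derives w S A Top
  | d_cut A B C : derives w S A B -> derives w S B C -> derives w S A C
  | d_andl A B : inL S (And A B) -> derives w S (And A B) A
  | d_andr A B : inL S (And A B) -> derives w S (And A B) B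
  | d_andI A B C : derives w S A B -> derives w S A C -> derives w S A (And B C)
  | d_mon a A B : In a S -> derives w S A B -> derives w S (Dia a A) (Dia a B)
  | d_trans a A : inL S (Dia a (Dia a A)) -> derives w S (Dia a (Dia a A)) (Dia a A)
  | d_ab a b A : mle b a -> inL S (Dia a (Dia b A)) ->
      derives w S (Dia a (Dia b A)) (Dia b A)
  | d_ba a b A : mle b a -> inL S (Dia b (Dia a A)) ->
      derives w S (Dia b (Dia a A)) (Dia b A)
  | d_J a b A B : mlt b a -> inL S (And (Dia a A) (Dia b B)) ->
      derives w S (And (Dia a A) (Dia b B)) (Dia a (And A (Dia b B)))
  | d_RC a b A : mlt b a -> inL S (Dia a A) -> In b S ->
      derives w S (Dia a A) (Dia b A)
  | d_omega A : w = true -> inL S (Dia Omega A) -> derives w S (Dia Omega A) A.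

Fixpoint forces {W : Type} (R : modal -> W -> W -> Prop) (V : nat -> W -> Prop)
    (x : W) (A : formula) : Prop :=
  match A with
  | Var p => V p x
  | Top => True
  | And A B => forces R V x A /\ forces R V x B
  | Dia a A => exists y, R a x y /\ forces R V y A
  end.

Definition RC_frame {W : Type} (S : list modal) (R : modal -> W -> W -> Prop) : Prop :=
  (forall a b, In a S -> In b S ->
     forall x y z, R a x y -> R b y z -> R (mmin a b) x z) /\
  (forall a b, In a S -> In b S -> mlt b a ->
     forall x y z, R a x y -> R b x z -> R b y z) /\
  (forall a b, In a S -> In b S -> mlt b a ->
     forall x y, R a x y -> R b x y).

Definition persistent {W : Type} (S : list modal) (R : modal -> W -> W -> Prop)
    (V : nat -> W -> Prop) : Prop :=
  In Omega S -> forall p x y, V p x -> R Omega y x -> V p y.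

Definition finite_type (W : Type) : Prop := exists l : list W, forall x : W, In x l.

Definition true_in {W : Type} (R : modal -> W -> W -> Prop) (V : nat -> W -> Prop)
    (A B : formula) : Prop :=
  forall x, forces R V x A -> forces R V x B.

Definition valid_finite_RC (pers : bool) (S : list modal) (A B : formula) : Prop :=
  forall (W : Type) (R : modal -> W -> W -> Prop) (V : nat -> W -> Prop),
    inhabited W -> finite_type W -> RC_frame S R ->
    (pers = true -> persistent S R V) ->
    true_in R V A B.

From Stdlib Require Import List Arith Lia Classical Eqdep_dec.
Import ListNotations.

(* Soundness holds in every (not necessarily finite) RC_S-model: each axiom
   corresponds to one of the three frame conditions, and ωA ⊢ A is valid
   because, in a persistent model, forcing of L_S-formulas is inherited
   backwards along R_ω.

   Completeness goes through a finite canonical model.  Fix the finite,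
   subformula-closed list sig of subformulas of A and B.  Worlds are the
   subsets of sig; a subset T is a "theory" if it consists of the sig-formulas
   derivable from some formula ψ of L_S.  R_a relates two theories T, U when
   every diamond ◇_c C ∈ sig with c ≤ a and C or ◇_c C in U lies in T, every
   diamond ◇_c C ∈ T with c < a lies in U, and (for RCω, a = ω) every variable
   of U lies in T.  This is an RC_S-frame, persistent for RCω.  The key
   existence lemma realises ◇_a C ∈ T by the theory of C ∧ ⋀{◇_c D ∈ T | c < a},
   which ψ derives under ◇_a thanks to the axiom J.  The truth lemma then says
   that a theory forces exactly its members, which yields completeness. *)

Lemma mlt_trans a b c : mlt a b -> mlt b c -> mlt a c.
Proof. destruct a, b, c; simpl; intros; try lia; tauto. Qed.

Lemma mle_mlt_trans a b c : mle a b -> mlt b c -> mlt a c.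
Proof. intros [H|<-] H2; [eapply mlt_trans; eauto | exact H2]. Qed.

Lemma mlt_mle_trans a b c : mlt a b -> mle b c -> mlt a c.
Proof. intros H [H2|<-]; [eapply mlt_trans; eauto | exact H]. Qed.

Lemma mle_trans a b c : mle a b -> mle b c -> mle a c.
Proof. intros [H|<-] H2; [left; eapply mlt_mle_trans; eauto | exact H2]. Qed.

Lemma mle_fin m n : m <= n -> mle (Fin m) (Fin n).
Proof.
  intros H; destruct (Nat.eq_dec m n) as [->|Hne]; [right; reflexivity|].
  left; simpl; lia.
Qed.

Lemma mle_mmin_l a b : mle (mmin a b) a.
Proof.
  destruct a, b; simpl; try (right; reflexivity); try (left; exact I).
  apply mle_fin; lia.
Qed.

Lemma mle_mmin_r a b : mle (mmin a b) b.
Proof.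
  destruct a, b; simpl; try (right; reflexivity); try (left; exact I).
  apply mle_fin; lia.
Qed.

Lemma mmin_omega a b : mmin a b = Omega -> a = Omega /\ b = Omega.
Proof. destruct a, b; simpl; intros H; try discriminate; auto. Qed.

(* When b ≤ a, the composite R_a R_b (or R_b R_a) lands in R_b. *)
Lemma mmin_le a b : mle b a -> mmin a b = b /\ mmin b a = b.
Proof.
  intros [H| <-].
  - destruct a, b; simpl in *; try contradiction; try (split; f_equal; lia); auto.
  - destruct b; simpl; [split; f_equal; lia | auto].
Qed.

Definition mltb (c a : modal) : bool :=
  match c, a with
  | Fin m, Fin n => Nat.ltb m n
  | Fin _, Omega => true
  | Omega, _ => false
  end.

Definition lower_dia (a : modal) (u : formula) : bool :=
  match u with Dia c _ => mltb c a | _ => false end.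

Lemma lower_dia_spec a u :
  lower_dia a u = true <-> exists c D, u = Dia c D /\ mlt c a.
Proof.
  split.
  - destruct u as [| | |c D]; simpl; try discriminate.
    intros H; exists c, D; split; [reflexivity|].
    destruct c, a; simpl in *; try discriminate; auto; apply Nat.ltb_lt; exact H.
  - intros (c & D & -> & H); simpl.
    destruct c, a; simpl in *; try contradiction; auto; apply Nat.ltb_lt; exact H.
Qed.

(* In a persistent RC_S-model, forcing of L_S-formulas is preserved
   backwards along R_ω; this validates the axiom ωA ⊢ A. *)
Lemma forces_back_omega {W : Type} S (R : modal -> W -> W -> Prop) V :
  RC_frame S R -> persistent S R V -> In Omega S ->
  forall A, inL S A -> forall x y, R Omega x y -> forces R V y A -> forces R V x A.
Proof.
  intros [Hcomp _] Hpers HO A; induction A as [p| |A1 IH1 A2 IH2|a A IH];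
    simpl; intros HA x y Rxy Hy.
  - exact (Hpers HO p y x Hy Rxy).
  - exact I.
  - destruct HA, Hy; split; eauto.
  - destruct HA as [Ha _], Hy as [z [Ryz Hz]].
    exists z; split; [|exact Hz].
    replace a with (mmin Omega a) by (destruct a; reflexivity).
    exact (Hcomp _ _ HO Ha _ _ _ Rxy Ryz).
Qed.

Lemma soundness_models w S A B :
  derives w S A B ->
  forall (W : Type) (R : modal -> W -> W -> Prop) (V : nat -> W -> Prop),
    RC_frame S R -> (w = true -> persistent S R V) -> true_in R V A B.
Proof.
  intros Hder W R V Hfr Hpers; pose proof Hfr as [Hcomp [Heucl Hmono]].
  unfold true_in; induction Hder as
    [X _ | X _ | X Y Z _ IH1 _ IH2 | X Y _ | X Y _ | X Y Z _ IH1 _ IH2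
    | a X Y Ha _ IH | a X HX | a b X Hba HX | a b X Hba HX | a b X Y Hba HXY
    | a b X Hba HX Hb | X Hw HX]; intros x Hx; simpl in *.
  - exact Hx.
  - exact I.
  - auto.
  - tauto.
  - tauto.
  - split; auto.
  - destruct Hx as [y [Rxy Hy]]; exists y; auto.
  - destruct HX as [Ha _], Hx as [y [Rxy [z [Ryz Hz]]]]; exists z; split; auto.
    destruct (mmin_le a a (or_intror eq_refl)) as [E _]; rewrite <- E; eauto.
  - destruct HX as [Ha [Hb _]], Hx as [y [Rxy [z [Ryz Hz]]]]; exists z; split; auto.
    destruct (mmin_le a b Hba) as [E _]; rewrite <- E; eauto.
  - destruct HX as [Hb [Ha _]], Hx as [y [Rxy [z [Ryz Hz]]]]; exists z; split; auto.
    destruct (mmin_le a b Hba) as [_ E]; rewrite <- E; eauto.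
  - destruct HXY as [[Ha _] [Hb _]], Hx as [[y [Rxy Hy]] [z [Rxz Hz]]].
    exists y; repeat split; [exact Rxy | exact Hy |].
    exists z; split; [exact (Heucl a b Ha Hb Hba x y z Rxy Rxz) | exact Hz].
  - destruct HX as [Ha _], Hx as [y [Rxy Hy]].
    exists y; split; [exact (Hmono a b Ha Hb Hba x y Rxy) | exact Hy].
  - subst w; destruct HX as [HO HX], Hx as [y [Rxy Hy]].
    exact (forces_back_omega S R V Hfr (Hpers eq_refl) HO X HX x y Rxy Hy).
Qed.

Corollary soundness w S A B : derives w S A B -> valid_finite_RC w S A B.
Proof.
  intros D W R V _ _ Hfr Hpers; exact (soundness_models w S A B D W R V Hfr Hpers).
Qed.

Lemma derives_inL w S A B : derives w S A B -> inL S A /\ inL S B.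
Proof. induction 1; simpl in *; subst; tauto. Qed.

Lemma derives_and_iff w S psi A B :
  inL S (And A B) ->
  derives w S psi (And A B) <-> derives w S psi A /\ derives w S psi B.
Proof.
  intros HAB; split.
  - intros D; split; eapply d_cut; eauto; [apply d_andl | apply d_andr]; exact HAB.
  - intros [DA DB]; apply d_andI; assumption.
Qed.

Lemma derives_dia_under w S psi a psi' X :
  derives w S psi (Dia a psi') -> derives w S psi' X -> derives w S psi (Dia a X).
Proof.
  intros D1 D2; destruct (derives_inL _ _ _ _ D1) as [_ [Ha _]].
  eapply d_cut; [exact D1 | apply d_mon; assumption].
Qed.

Fixpoint big_and (l : list formula) : formula :=
  match l with [] => Top | x :: l => And x (big_and l) end.

Lemma inL_big_and S l : (forall x, In x l -> inL S x) -> inL S (big_and l).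
Proof. induction l; simpl; auto. Qed.

Lemma big_and_mem w S l x : inL S (big_and l) -> In x l -> derives w S (big_and l) x.
Proof.
  induction l as [|y l IH]; simpl; [tauto|]; intros HL [<-|Hx].
  - apply d_andl; exact HL.
  - apply d_cut with (big_and l); [apply d_andr; exact HL | apply IH; tauto].
Qed.

(* Iterated axiom J: lower diamonds derivable from ψ may be pushed inside a
   derivable ◇_a C. *)
Lemma dia_collect w S psi a C L :
  derives w S psi (Dia a C) ->
  (forall x, In x L -> derives w S psi x /\ exists c D, x = Dia c D /\ mlt c a) ->
  derives w S psi (Dia a (And C (big_and L))).
Proof.
  induction L as [|x L IH]; intros HC HL.
  - destruct (derives_inL _ _ _ _ HC) as [_ [_ HCin]].
    apply (derives_dia_under _ _ _ _ _ _ HC).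
    apply d_andI; [apply d_refl | apply d_top]; exact HCin.
  - destruct (HL x (or_introl eq_refl)) as [Hx [c [D [-> Hlt]]]].
    pose proof (IH HC (fun y Hy => HL y (or_intror Hy))) as HCL.
    destruct (derives_inL _ _ _ _ HCL) as [_ [Ha HCLin]].
    destruct (derives_inL _ _ _ _ Hx) as [_ HcD].
    set (CL := And C (big_and L)) in *.
    (* J gives ψ ⊢ ◇_a (CL ∧ ◇_c D); then regroup the conjunction. *)
    assert (J : derives w S psi (Dia a (And CL (Dia c D)))).
    { apply d_cut with (And (Dia a CL) (Dia c D)); [apply d_andI; assumption|].
      apply d_J; simpl; tauto. }
    apply (derives_dia_under _ _ _ _ _ _ J).
    assert (HCLD : inL S (And CL (Dia c D))) by (simpl; tauto).
    destruct (proj1 (derives_and_iff w S _ _ _ HCLD) (d_refl _ _ _ HCLD)) as [E1 E2].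
    destruct (proj1 (derives_and_iff w S _ _ _ HCLin) E1) as [EC EL].
    simpl; apply d_andI; [exact EC | apply d_andI; assumption].
Qed.

Fixpoint sub (A : formula) : list formula :=
  A :: match A with
       | And B C => sub B ++ sub C
       | Dia _ B => sub B
       | _ => []
       end.

Lemma sub_refl A : In A (sub A).
Proof. destruct A; simpl; auto. Qed.

Lemma sub_inL S A u : inL S A -> In u (sub A) -> inL S u.
Proof.
  induction A; simpl; intros HA [<-|Hu]; auto; try contradiction.
  - destruct HA; apply in_app_or in Hu; destruct Hu; auto.
  - destruct HA; auto.
Qed.

Definition closed_at (sig : list formula) (u : formula) : Prop :=
  match u with And C D => In C sig /\ In D sig | Dia _ C => In C sig | _ => True end.

Definition subformula_closed (sig : list formula) : Prop :=
  forall u, In u sig -> closed_at sig u.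

Lemma closed_at_incl sig sig' u : incl sig sig' -> closed_at sig u -> closed_at sig' u.
Proof. intros Hi; destruct u; simpl; intuition. Qed.

Lemma sub_closed A : subformula_closed (sub A).
Proof.
  induction A as [p| |A1 IH1 A2 IH2|a A IH]; intros u [<-|Hu]; simpl in *;
    try contradiction; try exact I.
  - split; right; apply in_or_app; [left | right]; apply sub_refl.
  - apply in_app_or in Hu as [Hu|Hu];
      [eapply closed_at_incl, IH1, Hu | eapply closed_at_incl, IH2, Hu];
      intros v Hv; right; apply in_or_app; auto.
  - right; apply sub_refl.
  - eapply closed_at_incl, IH, Hu; intros v Hv; right; exact Hv.
Qed.

Lemma closed_app l1 l2 :
  subformula_closed l1 -> subformula_closed l2 -> subformula_closed (l1 ++ l2).
Proof.
  intros H1 H2 u Hu; apply in_app_or in Hu; destruct Hu as [Hu|Hu];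
    [eapply closed_at_incl, H1, Hu | eapply closed_at_incl, H2, Hu];
    intros v Hv; apply in_or_app; auto.
Qed.

(* Subsets of a finite list, coded as bit vectors; they form a finite type. *)

Fixpoint select (l : list formula) (t : list bool) : list formula :=
  match l, t with
  | x :: l', b :: t' => if b then x :: select l' t' else select l' t'
  | _, _ => []
  end.

Lemma select_incl l t u : In u (select l t) -> In u l.
Proof.
  revert t; induction l as [|x l IH]; intros [|b t]; simpl; try tauto.
  destruct b; simpl; [intros [<-|H]; [left; reflexivity | right; eapply IH, H]
                     | intros H; right; eapply IH, H].
Qed.

Lemma selection_exists (l : list formula) (P : formula -> Prop) :
  exists t, length t = length l /\ forall u, In u (select l t) <-> In u l /\ P u.
Proof.
  induction l as [|x l IH]; [exists []; simpl; tauto|].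
  destruct IH as [t [Ht Hu]]; destruct (classic (P x)) as [Hx|Hx];
    [exists (true :: t) | exists (false :: t)]; simpl; (split; [congruence|]);
    intros u; rewrite Hu; split.
  - intros [<-|H]; tauto.
  - intros [[<-|H] HP]; tauto.
  - tauto.
  - intros [[<-|H] HP]; tauto.
Qed.

Definition Subset (sig : list formula) := {t : list bool | length t = length sig}.

Definition mem (sig : list formula) (T : Subset sig) (u : formula) : Prop :=
  In u (select sig (proj1_sig T)).

Lemma mem_in sig T u : mem sig T u -> In u sig.
Proof. apply select_incl. Qed.

Lemma subset_exists sig (P : formula -> Prop) :
  exists T : Subset sig, forall u, mem sig T u <-> In u sig /\ P u.
Proof.
  destruct (selection_exists sig P) as [t [Ht Hu]]; exists (exist _ t Ht); exact Hu.
Qed.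

Fixpoint bit_vectors (n : nat) : list (list bool) :=
  match n with
  | 0 => [[]]
  | S n => flat_map (fun l => [true :: l; false :: l]) (bit_vectors n)
  end.

Lemma bit_vectors_complete t : In t (bit_vectors (length t)).
Proof.
  induction t as [|b t IH]; simpl; auto.
  apply in_flat_map; exists t; split; auto; destruct b; simpl; auto.
Qed.

Lemma Subset_finite sig : finite_type (Subset sig).
Proof.
  exists (flat_map (fun t => match Nat.eq_dec (length t) (length sig) with
                             | left H => [exist _ t H] | right _ => [] end)
                   (bit_vectors (length sig))).
  intros [t H]; apply in_flat_map; exists t; split.
  - rewrite <- H; apply bit_vectors_complete.
  - destruct (Nat.eq_dec (length t) (length sig)) as [H'|H']; [|contradiction].
    left; f_equal; apply UIP_dec, Nat.eq_dec.
Qed.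

Section CanonicalModel.

Variable w : bool.
Variable S : list modal.
Variable sig : list formula.
Hypothesis sig_inL : forall u, In u sig -> inL S u.
Hypothesis sig_closed : subformula_closed sig.

Definition theory_of (psi : formula) (T : Subset sig) : Prop :=
  inL S psi /\ forall u, In u sig -> (mem sig T u <-> derives w S psi u).

Definition is_theory (T : Subset sig) : Prop := exists psi, theory_of psi T.

Lemma theory_exists psi : inL S psi -> exists T, theory_of psi T.
Proof.
  intros Hpsi; destruct (subset_exists sig (derives w S psi)) as [T HT].
  exists T; split; [exact Hpsi|]; intros u Hu; rewrite HT; tauto.
Qed.

Definition canon_rel (a : modal) (T U : Subset sig) : Prop :=
  is_theory T /\ is_theory U /\
  (forall c C, mle c a -> In (Dia c C) sig ->
     (mem sig U C \/ mem sig U (Dia c C)) -> mem sig T (Dia c C)) /\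
  (forall c C, mlt c a -> mem sig T (Dia c C) -> mem sig U (Dia c C)) /\
  (w = true -> a = Omega -> forall p, mem sig U (Var p) -> mem sig T (Var p)).

Definition canon_val (p : nat) (T : Subset sig) : Prop := mem sig T (Var p).

Lemma canon_comp : forall a b x y z,
  canon_rel a x y -> canon_rel b y z -> canon_rel (mmin a b) x z.
Proof.
  intros a b x y z [gx [_ [A1 [B1 O1]]]] [_ [gz [A2 [B2 O2]]]].
  repeat split; auto.
  - intros c C Hle Hin Hm; apply A1; auto.
    + eapply mle_trans; [exact Hle | apply mle_mmin_l].
    + right; apply A2; auto; eapply mle_trans; [exact Hle | apply mle_mmin_r].
  - intros c C Hlt Hm; apply B2; [eapply mlt_mle_trans; [exact Hlt | apply mle_mmin_r]|].
    apply B1; auto; eapply mlt_mle_trans; [exact Hlt | apply mle_mmin_l].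
  - intros Hw Ho p Hp; destruct (mmin_omega _ _ Ho) as [-> ->]; auto.
Qed.

Lemma canon_eucl : forall a b, mlt b a -> forall x y z,
  canon_rel a x y -> canon_rel b x z -> canon_rel b y z.
Proof.
  intros a b Hba x y z [_ [gy [A1 [B1 _]]]] [_ [gz [A2 [B2 _]]]].
  repeat split; auto.
  - intros c C Hle Hin Hm; apply B1; [eapply mle_mlt_trans; eauto|]; apply A2; auto.
  - intros c C Hlt Hm; apply B2; auto; apply A1; auto.
    + left; eapply mlt_trans; eauto.
    + eapply mem_in; eauto.
  - intros _ ->; destruct a; contradiction.
Qed.

Lemma canon_mono : forall a b, mlt b a -> forall x y, canon_rel a x y -> canon_rel b x y.
Proof.
  intros a b Hba x y [gx [gy [A1 [B1 _]]]]; repeat split; auto.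
  - intros c C Hle Hin Hm; apply A1; auto; eapply mle_trans; [exact Hle | left; exact Hba].
  - intros c C Hlt Hm; apply B1; auto; eapply mlt_trans; eauto.
  - intros _ ->; destruct a; contradiction.
Qed.

Lemma canon_frame : RC_frame S canon_rel.
Proof.
  split; [|split]; intros a b _ _; [apply canon_comp | apply canon_eucl | apply canon_mono].
Qed.

Lemma canon_persistent : w = true -> persistent S canon_rel canon_val.
Proof. intros Hw _ p x y Hp [_ [_ [_ [_ O]]]]; exact (O Hw eq_refl p Hp). Qed.

Lemma canon_rel_intro a psi psi' T U :
  theory_of psi T -> theory_of psi' U ->
  derives w S psi (Dia a psi') ->
  (forall c D, mlt c a -> mem sig T (Dia c D) -> derives w S psi' (Dia c D)) ->
  canon_rel a T U.
Proof.
  intros [Hpsi HT] [Hpsi' HU] Hkey Hlow.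
  destruct (derives_inL _ _ _ _ Hkey) as [_ [Ha _]].
  repeat split; [exists psi; split; auto | exists psi'; split; auto | | |].
  - intros c C Hle Hin Hm; apply HT; [exact Hin|].
    destruct (sig_inL _ Hin) as [Hc HC].
    destruct Hm as [Hm|Hm]; apply HU in Hm; try (eapply mem_in; exact Hm).
    + pose proof (derives_dia_under _ _ _ _ _ _ Hkey Hm) as HaC.
      destruct Hle as [Hlt| ->]; [|exact HaC].
      eapply d_cut; [exact HaC | apply d_RC; simpl; auto].
    + eapply d_cut; [exact (derives_dia_under _ _ _ _ _ _ Hkey Hm)|].
      apply d_ab; simpl; auto.
  - intros c D Hlt Hm; apply HU; [eapply mem_in; exact Hm | exact (Hlow c D Hlt Hm)].
  - intros Hw -> p Hp; apply HT; [eapply mem_in; exact Hp|].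
    apply HU in Hp; [|eapply mem_in; exact Hp].
    eapply d_cut; [exact (derives_dia_under _ _ _ _ _ _ Hkey Hp)|].
    apply d_omega; simpl; auto.
Qed.

(* Existence lemma: ◇_a C ∈ T is witnessed by the theory of
   C ∧ ⋀{◇_c D ∈ T | c < a}. *)
Lemma canon_existence a C T :
  is_theory T -> mem sig T (Dia a C) -> exists U, canon_rel a T U /\ mem sig U C.
Proof.
  intros [psi [Hpsi HT]] Hm.
  assert (HaCsig : In (Dia a C) sig) by (eapply mem_in; exact Hm).
  assert (HCsig : In C sig) by exact (sig_closed _ HaCsig).
  set (L := filter (lower_dia a) (select sig (proj1_sig T))).
  assert (HL : forall x, In x L -> mem sig T x /\ exists c D, x = Dia c D /\ mlt c a).
  { intros x Hx; apply filter_In in Hx as [Hx Hlow]; split; [exact Hx|].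
    apply lower_dia_spec; exact Hlow. }
  assert (HLsig : forall x, In x L -> In x sig) by (intros x Hx; apply (mem_in sig T), HL, Hx).
  set (psi' := And C (big_and L)).
  assert (Hpsi' : inL S psi').
  { split; [apply sig_inL, HCsig | apply inL_big_and; intros x Hx; apply sig_inL, HLsig, Hx]. }
  destruct (theory_exists psi' Hpsi') as [U [_ HU]].
  exists U; split.
  - apply (canon_rel_intro a psi psi'); [split; assumption | split; assumption | |].
    + apply dia_collect; [apply HT; assumption|].
      intros x Hx; destruct (HL x Hx) as [HxT Hlow]; split; [|exact Hlow].
      apply HT; [apply HLsig, Hx | exact HxT].
    + intros c D Hlt HcD.
      assert (HinL : In (Dia c D) L).
      { apply filter_In; split; [exact HcD|]; apply lower_dia_spec; eauto. }
      apply d_cut with (big_and L); [apply d_andr; exact Hpsi'|].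
      apply big_and_mem; [exact (proj2 Hpsi') | exact HinL].
  - apply HU; [exact HCsig|]; apply d_andl; exact Hpsi'.
Qed.

Lemma canon_truth u : In u sig -> forall T, is_theory T ->
  (forces canon_rel canon_val T u <-> mem sig T u).
Proof.
  induction u as [p| |u1 IH1 u2 IH2|a u IH]; intros Hin T gT; simpl.
  - reflexivity.
  - destruct gT as [psi [Hpsi HT]]; rewrite HT by exact Hin.
    split; [intros _; apply d_top; exact Hpsi | constructor].
  - destruct (sig_closed _ Hin) as [H1 H2].
    rewrite IH1, IH2 by assumption.
    destruct gT as [psi [_ HT]]; rewrite !HT by assumption.
    symmetry; apply derives_and_iff, sig_inL, Hin.
  - pose proof (sig_closed _ Hin) as HuSig; simpl in HuSig.
    split.
    + intros [U [[_ [gU [Hback _]]] HU]].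
      apply Hback; [right; reflexivity | exact Hin | left; apply IH; assumption].
    + intros Hm; destruct (canon_existence a u T gT Hm) as [U [RTU HU]].
      exists U; split; [exact RTU|].
      apply IH; [exact HuSig | exact (proj1 (proj2 RTU)) | exact HU].
Qed.

End CanonicalModel.

(* Completeness with respect to finite (persistent) RC_S-models: the theory of
   A forces A in the canonical model over sub A ++ sub B, hence forces B, so
   B belongs to it, i.e. A ⊢ B. *)
Lemma completeness w S A B :
  inL S A -> inL S B -> valid_finite_RC w S A B -> derives w S A B.
Proof.
  intros HA HB Hvalid.
  set (sig := sub A ++ sub B).
  assert (Hsig : forall u, In u sig -> inL S u).
  { intros u Hu; apply in_app_or in Hu as [Hu|Hu];
      [exact (sub_inL S A u HA Hu) | exact (sub_inL S B u HB Hu)]. }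
  assert (Hcl : subformula_closed sig) by (apply closed_app; apply sub_closed).
  assert (HAsig : In A sig) by (apply in_or_app; left; apply sub_refl).
  assert (HBsig : In B sig) by (apply in_or_app; right; apply sub_refl).
  destruct (theory_exists w S sig A HA) as [T HT].
  assert (gT : is_theory w S sig T) by (exists A; exact HT).
  assert (HfA : forces (canon_rel w S sig) (canon_val sig) T A).
  { apply canon_truth; auto; apply HT; [exact HAsig | apply d_refl, HA]. }
  pose proof (Hvalid _ _ _ (inhabits T) (Subset_finite sig) (canon_frame w S sig)
                (canon_persistent w S sig) T HfA) as HfB.
  apply (canon_truth w S sig Hsig Hcl B HBsig T gT), HT in HfB; assumption.
Qed.

Theorem corollary4p3 (S : list modal) (A B : formula) :
  inL S A -> inL S B ->
  (derives false S A B <-> valid_finite_RC false S A B) /\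
  (derives true S A B <-> valid_finite_RC true S A B).
Proof.
  intros HA HB; split; split; [apply soundness | apply completeness; assumption
                              | apply soundness | apply completeness; assumption].
Qed.
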